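(* Let $n\ge2$ and $(x,y)\in\mathbb{C}^n\times\mathbb{C}^{n-1}$. Then $(x,y)\in\mathbb{G}_{1,n}$ if and only if both of the following hold: (I) the restriction of $\Psi_n(\cdot;x,y)$ to $\overline{\mathbb{D}}$ lies in $\mathcal{O}(\mathbb{D})\cap\mathcal{C}(\overline{\mathbb{D}})$ and $\sup_{z\in\partial\mathbb{D}}|\Psi_n(z;x,y)|<1$; (II) if $\mathscr{R}_n(x,y)=0$, then every common zero of $P_n(\cdot;x)$ and $Q_n(\cdot;y)$ lies outside $\overline{\mathbb{D}}$.
   Context: $\mathbb{D}$ is the open unit disc. $P_n(z;x):=\sum_{j=0}^{n-1}(-1)^jx_{j+1}z^j$, $Q_n(z;y):=1+\sum_{j=1}^{n-1}(-1)^jy_jz^j$. $\mathbb{G}_{1,n}:=\{(x,y)\in\mathbb{C}^n\times\mathbb{C}^{n-1}: \text{the zero set of }(z,w)\mapsto Q_n(z;y)-wP_n(z;x)\text{ does not meet }\overline{\mathbb{D}}^2\}$. $\Psi_n(\cdot;x,y)$ is the rational function $P_n(\cdot;x)/Q_n(\cdot;y)$ with all common linear factors of numerator and denominator cancelled. $\mathscr{R}_n(x,y)$ is the resultant of the univariate polynomials $P_n(\cdot;x)$ and $Q_n(\cdot;y)$. *)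

(* The complex plane is modelled by an arbitrary
   numClosedFieldType C (algebraically closed field with a norm, of which the
   complex numbers are the model). *)
From HB Require Import structures.
From mathcomp Require Import all_boot all_order all_algebra.
Set Implicit Arguments. Unset Strict Implicit. Unset Printing Implicit Defensive.
Import Order.TTheory GRing.Theory Num.Theory.
Local Open Scope ring_scope.

(* P_n(z;x) = sum_{j=0}^{n-1} (-1)^j x_{j+1} z^j ; x j (0-based) = x_{j+1} *)
Definition Pn (C : numClosedFieldType) (n : nat) (x : 'I_n -> C) : {poly C} :=
  \sum_(j < n) ((-1) ^+ j * x j) *: 'X^j.

(* Q_n(z;y) = 1 + sum_{j=1}^{n-1} (-1)^j y_j z^j ; y j (0-based) = y_{j+1} *)
Definition Qn (C : numClosedFieldType) (n : nat) (y : 'I_n.-1 -> C) : {poly C} :=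
  1 + \sum_(j < n.-1) ((-1) ^+ j.+1 * y j) *: 'X^(j.+1).

Definition G1n (C : numClosedFieldType) (n : nat) (x : 'I_n -> C) (y : 'I_n.-1 -> C) : Prop :=
  forall z w : C, `|z| <= 1 -> `|w| <= 1 -> (Qn y).[z] - w * (Pn x).[z] != 0.

(* Psi_n = P_n/Q_n with all common (linear) factors cancelled, i.e. divided by
   their gcd (over an algebraically closed field every common factor is a
   product of linear ones).  Evaluated pointwise; at poles the total
   division of MathComp yields 0, so a pole in the closed disc makes the
   function discontinuous there. *)
Definition Psin (C : numClosedFieldType) (n : nat) (x : 'I_n -> C) (y : 'I_n.-1 -> C)
  (z : C) : C :=
  let g := gcdp (Pn x) (Qn y) in ((Pn x %/ g).[z]) / ((Qn y %/ g).[z]).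

Definition Rn (C : numClosedFieldType) (n : nat) (x : 'I_n -> C) (y : 'I_n.-1 -> C) : C :=
  resultant (Pn x) (Qn y).

Definition cont_on_cldisc (C : numClosedFieldType) (f : C -> C) : Prop :=
  forall z0 : C, `|z0| <= 1 -> forall e : C, 0 < e -> exists2 d : C, 0 < d &
    forall z : C, `|z| <= 1 -> `|z - z0| < d -> `|f z - f z0| < e.

Definition holo_on_disc (C : numClosedFieldType) (f : C -> C) : Prop :=
  forall z0 : C, `|z0| < 1 -> exists l : C, forall e : C, 0 < e -> exists2 d : C, 0 < d &
    forall z : C, `|z| < 1 -> 0 < `|z - z0| < d ->
      `|(f z - f z0) / (z - z0) - l| < e.

(* Write P_n = p g and Q_n = q g with g = gcd(P_n, Q_n), so that Psi_n = p / q with p, q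
   coprime.  Membership in G_{1,n} amounts to |P_n| < |Q_n| on the closed disc.  Then
   Q_n, hence q and g, has no zero on the closed disc, Psi_n is a rational function
   without poles there, and |p| < |q| on the circle becomes uniform through a positive
   lower bound of the polynomial q q^* - p p^*, which equals |q|^2 - |p|^2 on the circle.
   Conversely, continuity of Psi_n excludes zeros of q from the closed disc, (II) excludes
   zeros of g, and a maximum principle carries |p| <= r |q| from the circle inside.
   As the field is only an algebraically closed normed field, the maximum principle is
   proved algebraically: the solutions of B(z) = 1, for a finite Blaschke product B
   vanishing at z0 and at the reflections 1/a^* of the roots a of q, are simple and lie
   on the circle, and Lagrange interpolation at them writes (p/q)(z0) as a convex
   combination of the values of p/q there (a discrete Poisson formula). *)

From mathcomp Require Import all_boot all_order all_algebra separable ring.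
Import Order.TTheory GRing.Theory Num.Theory.
Local Open Scope ring_scope.

Section Interpolation.
Context {F : fieldType}.
Implicit Types (E h : {poly F}) (cs : seq F).

Lemma horner_deriv_prod (I : eqType) (s : seq I) (f : I -> {poly F}) (x : F) :
  (forall i, i \in s -> (f i).[x] != 0) ->
  (\prod_(i <- s) f i)^`().[x] =
    (\prod_(i <- s) f i).[x] * \sum_(i <- s) (f i)^`().[x] / (f i).[x].
Proof.
elim: s => [|i s IHs] fx0; first by rewrite !big_nil derivC horner0 mulr0.
have fi0 := fx0 i (mem_head i s).
rewrite !big_cons derivM !hornerE IHs => [|j js]; last by rewrite fx0 // inE js orbT.
by field.
Qed.

Lemma lagrange_interpolation E h cs (x : F) :
  uniq cs -> E = lead_coef E *: \prod_(c <- cs) ('X - c%:P) ->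
  (size h <= size cs)%N -> ~~ root E x ->
  h.[x] = E.[x] * \sum_(c <- cs) h.[c] / ((x - c) * E^`().[c]).
Proof.
move=> ucs Ecs hcs Ex.
have lE0 : lead_coef E != 0 by apply: contraNneq Ex => l0; rewrite Ecs l0 scale0r root0.
pose G c := lead_coef E *: \prod_(c' <- rem c cs) ('X - c'%:P).
have GE c : c \in cs -> E = G c * ('X - c%:P).
  move=> cs_c; rewrite {1}Ecs (perm_big _ (perm_to_rem cs_c)) /= big_cons.
  by rewrite /G -scalerAl mulrC.
have G_root c c' : c \in cs -> root (G c) c' = (c' != c) && (c' \in cs).
  by move=> cs_c; rewrite rootZ // root_prod_XsubC mem_rem_uniq.
have Gc_deriv c : c \in cs -> (G c).[c] = E^`().[c].
  by move=> cs_c; rewrite [in RHS](GE c cs_c) derivM derivXsubC !hornerE subrr; ring.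
have Gc0 c : c \in cs -> (G c).[c] != 0.
  by move=> cs_c; have := G_root c c cs_c; rewrite eqxx rootE => ->.
(* both sides have size at most [size cs] and agree on the distinct points [cs] *)
have hE : h = \sum_(c <- cs) (h.[c] / (G c).[c]) *: G c.
  apply/eqP; rewrite -subr_eq0; apply/eqP/(roots_geq_poly_eq0 (rs := cs)) => //.
    apply/allP => c' cs_c'; rewrite rootE !hornerE horner_sum (bigD1_seq c') //=.
    rewrite hornerZ divfK ?Gc0 // big1_seq ?addr0 ?subrr // => c /andP[c'c cs_c].
    have : root (G c) c' by rewrite G_root // eq_sym c'c.
    by rewrite hornerZ => /rootP ->; rewrite mulr0.
  rewrite (leq_trans (size_polyD _ _)) // geq_max hcs size_polyN.
  rewrite big_seq (big_ind (fun g : {poly F} => size g <= size cs)%N) ?size_poly0 //.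
    by move=> g1 g2 g1s g2s; rewrite (leq_trans (size_polyD _ _)) // geq_max g1s.
  move=> c cs_c; rewrite (leq_trans (size_scale_leq _ _)) // size_scale //.
  by rewrite size_prod_XsubC size_rem // prednK // -has_predT; apply/hasP; exists c.
rewrite {1}hE horner_sum mulr_sumr; apply: eq_big_seq => c cs_c.
have xc : x - c != 0.
  by rewrite subr_eq0; apply: contraNneq Ex => ->; rewrite (GE c cs_c) rootM root_XsubC eqxx orbT.
rewrite hornerZ -(Gc_deriv c cs_c) [in E.[x]](GE c cs_c) hornerM hornerXsubC.
by field; rewrite xc Gc0.
Qed.

End Interpolation.

Section Disc.
Context {C : numClosedFieldType}.
Implicit Types (p q : {poly C}) (z : C).

Lemma conjC_norm1 z : `|z| = 1 -> z^* = z^-1.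
Proof.
move=> z1; have z0 : z != 0 by rewrite -normr_eq0 z1 oner_eq0.
by apply: (mulfI z0); rewrite -normCK z1 expr1n mulfV.
Qed.

Lemma exists_gt0_le2 {a b : C} : 0 < a -> 0 < b ->
  exists2 c : C, 0 < c & c <= a /\ c <= b.
Proof.
move=> a0 b0; case: (real_leP (gtr0_real a0) (gtr0_real b0)) => ab.
  by exists a.
by exists b => //; split=> //; apply: ltW.
Qed.

Lemma norm_horner_le_sum p z : `|z| <= 1 -> `|p.[z]| <= \sum_(i < size p) `|p`_i|.
Proof.
move=> z1; rewrite horner_coef; apply: le_trans (ler_norm_sum _ _ _) _.
apply: ler_sum => i _; rewrite normrM normrX.
by apply: ler_piMr => //; apply: exprn_ile1.
Qed.

Lemma horner_lipschitz p (z0 : C) : exists2 K : C, 0 < K &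
  forall z, `|z| <= 1 -> `|p.[z] - p.[z0]| <= K * `|z - z0|.
Proof.
have: root (p - p.[z0]%:P) z0 by rewrite rootE !hornerE subrr.
case/factor_theorem => D pD.
exists (1 + \sum_(i < size D) `|D`_i|).
  by apply: (lt_le_trans ltr01); rewrite lerDl sumr_ge0.
move=> z z1; have -> : p.[z] - p.[z0] = D.[z] * (z - z0).
  by have := congr1 (horner^~ z) pD; rewrite !hornerE.
by rewrite normrM ler_wpM2r // (le_trans (norm_horner_le_sum D z z1)) // lerDr.
Qed.

Lemma rational_lipschitz p q (z0 : C) : q.[z0] != 0 ->
  exists2 d : C, 0 < d & exists2 K : C, 0 < K &
    forall z, `|z| <= 1 -> `|z - z0| < d ->
      q.[z] != 0 /\ `|p.[z] / q.[z] - p.[z0] / q.[z0]| <= K * `|z - z0|.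
Proof.
move=> qz0; set b := q.[z0]; have b0 : 0 < `|b| by rewrite normr_gt0.
have [Kq Kq0 Kq_lip] := horner_lipschitz q z0.
pose H := p * b%:P - p.[z0]%:P * q.
have HE z : H.[z] = p.[z] * b - p.[z0] * q.[z] by rewrite !hornerE.
have [KH KH0 KH_lip] := horner_lipschitz H z0.
exists (`|b| / (2 * Kq)); first by rewrite divr_gt0 // mulr_gt0.
exists (2 * KH / `|b| ^+ 2); first by rewrite divr_gt0 ?mulr_gt0 ?exprn_gt0.
move=> z z1 zd.
have qz_ge : `|b| / 2 <= `|q.[z]|.
  have : Kq * `|z - z0| <= `|b| / 2.
    rewrite -[`|b| / 2](_ : Kq * (`|b| / (2 * Kq)) = _); last by field; rewrite gt_eqF.
    by rewrite ler_pM2l // ltW.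
  move/(le_trans (Kq_lip z z1)); rewrite distrC => /(le_trans (lerB_dist _ _)).
  by rewrite lerBlDr => h; rewrite -(lerD2l (`|b| / 2)) -splitr.
have qz : q.[z] != 0 by rewrite -normr_gt0 (lt_le_trans _ qz_ge) ?divr_gt0.
split=> //.
have -> : p.[z] / q.[z] - p.[z0] / b = H.[z] / (q.[z] * b).
  by rewrite HE; field; rewrite qz qz0.
have := KH_lip z z1; rewrite [H.[z0]]HE subrr subr0 => Hz.
rewrite normrM normfV normrM ler_pdivrMr ?mulr_gt0 ?normr_gt0 //.
apply: (le_trans Hz); have -> : KH * `|z - z0| =
    2 * KH / `|b| ^+ 2 * `|z - z0| * (`|b| / 2 * `|b|) by field; rewrite gt_eqF.
have w0 : 0 <= 2 * KH / `|b| ^+ 2 by rewrite ltW // divr_gt0 ?mulr_gt0 ?exprn_gt0.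
by rewrite ler_wpM2l ?ler_wpM2r //; apply: mulr_ge0.
Qed.

Lemma rational_cont_on_cldisc p q : (forall z, `|z| <= 1 -> q.[z] != 0) ->
  cont_on_cldisc (fun z => p.[z] / q.[z]).
Proof.
move=> qnz z0 z01 e e0.
have [d d0 [K K0 lip]] := rational_lipschitz p _ _ (qnz z0 z01).
have [c c0 [cd cK]] := exists_gt0_le2 d0 (divr_gt0 e0 K0).
exists c => // z z1 zc; have [_ le_e] := lip z z1 (lt_le_trans zc cd).
rewrite (le_lt_trans le_e) // mulrC -ltr_pdivlMr //.
exact: lt_le_trans zc cK.
Qed.

Lemma rational_holo_on_disc p q : (forall z, `|z| <= 1 -> q.[z] != 0) ->
  holo_on_disc (fun z => p.[z] / q.[z]).
Proof.
move=> qnz z0 z01; have qz0 := qnz z0 (ltW z01).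
pose H := p * q.[z0]%:P - p.[z0]%:P * q.
have: root H z0 by rewrite rootE !hornerE mulrC subrr.
case/factor_theorem => DH HE.
have dq z : z != z0 -> q.[z] != 0 ->
    (p.[z] / q.[z] - p.[z0] / q.[z0]) / (z - z0) = DH.[z] / (q.[z] * q.[z0]).
  move=> zz0 qz; have := congr1 (horner^~ z) HE; rewrite !hornerE => eH.
  have -> : p.[z] / q.[z] - p.[z0] / q.[z0] =
      (p.[z] * q.[z0] - p.[z0] * q.[z]) / (q.[z] * q.[z0]) by field; rewrite qz qz0.
  by rewrite eH; field; rewrite qz qz0 subr_eq0 zz0.
have b0 : (q * q.[z0]%:P).[z0] != 0 by rewrite !hornerE mulf_neq0.
exists (DH.[z0] / (q * q.[z0]%:P).[z0]) => e e0.
have [d d0 [K K0 lip]] := rational_lipschitz DH _ _ b0.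
have [c c0 [cd cK]] := exists_gt0_le2 d0 (divr_gt0 e0 K0).
exists c => // z z1 /andP[zz0 zc]; have [bz le_e] := lip z (ltW z1) (lt_le_trans zc cd).
move: bz le_e; rewrite !hornerE mulf_eq0 negb_or => /andP[qz _] le_e.
rewrite dq //; last by rewrite -subr_eq0 -normr_gt0.
apply: le_lt_trans le_e _; rewrite mulrC -ltr_pdivlMr //.
exact: lt_le_trans zc cK.
Qed.

Lemma horner_cont_on_cldisc p : cont_on_cldisc (horner p).
Proof.
move=> z0 _ e e0; have [K K0 lip] := horner_lipschitz p z0.
exists (e / K) => [|z z1 zd]; first by rewrite divr_gt0.
by apply: le_lt_trans (lip z z1) _; rewrite mulrC -ltr_pdivlMr.
Qed.

Lemma cldisc_point_near {z0 d : C} : `|z0| <= 1 -> 0 < d ->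
  exists z, `|z| <= 1 /\ 0 < `|z - z0| < d.
Proof.
move=> z01 d0; have [c c0 [cd c1]] := exists_gt0_le2 d0 ltr01.
set t := c / 2; have t0 : 0 < t by rewrite divr_gt0.
have tc : t < c by rewrite ltr_pdivrMr // ltr_pMr // ltr1n.
have t1 : 0 <= 1 - t by rewrite subr_ge0 ltW // (lt_le_trans tc).
have td : t < d by rewrite (lt_le_trans tc).
have [->|nz0] := eqVneq z0 0.
  by exists t; rewrite subr0 gtr0_norm // t0 td -subr_ge0.
have t1' : 1 - t <= 1 by rewrite gerBl ltW.
exists (z0 * (1 - t)); have -> : z0 * (1 - t) - z0 = - (z0 * t) by ring.
rewrite normrN normrM (ger0_norm t1) normrM (gtr0_norm t0) mulr_ile1 ?normr_ge0 //.
split=> //; apply/andP; split; first by rewrite mulr_gt0 ?normr_gt0.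
by rewrite (le_lt_trans _ td) // ler_piMl // ltW.
Qed.

Lemma rational_not_cont_at_pole p q (z0 : C) : q != 0 -> `|z0| <= 1 ->
  root q z0 -> p.[z0] != 0 -> ~ cont_on_cldisc (fun z => p.[z] / q.[z]).
Proof.
move=> q0 z01 qz0 pz0 cont.
have [mu [s sz0 qE]] := multiplicity_XsubC q z0; rewrite q0 /= in sz0.
set e := `|p.[z0]| / 2; have e0 : 0 < e by rewrite divr_gt0 ?normr_gt0.
have s0 : 0 < `|s.[z0]| by rewrite normr_gt0.
have [d1 d10 near_ratio] := cont z0 z01 e e0.
have [d2 d20 near_p] := horner_cont_on_cldisc p z0 z01 e e0.
have [d3 d30 near_s] := horner_cont_on_cldisc s z0 z01 _ s0.
have [d4 d40 near_q] := horner_cont_on_cldisc q z0 z01 1 ltr01.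
have [d12 d120 [d12_1 d12_2]] := exists_gt0_le2 d10 d20.
have [d34 d340 [d34_3 d34_4]] := exists_gt0_le2 d30 d40.
have [d d0 [d_12 d_34]] := exists_gt0_le2 d120 d340.
have [z [z1 /andP[zz0 zd]]] := cldisc_point_near z01 d0.
have zd12 : `|z - z0| < d12 by apply: lt_le_trans zd d_12.
have zd34 : `|z - z0| < d34 by apply: lt_le_trans zd d_34.
have sz : s.[z] != 0.
  apply: contraTneq (near_s z z1 (lt_le_trans zd34 d34_3)) => ->.
  by rewrite sub0r normrN ltxx.
have qz : q.[z] != 0.
  by rewrite qE hornerM mulf_neq0 // horner_exp hornerXsubC expf_neq0 // -normr_gt0.
have q_small : `|q.[z]| <= 1.
  have := near_q z z1 (lt_le_trans zd34 d34_4).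
  by rewrite (rootP qz0) subr0 => /ltW.
have p_big : e < `|p.[z]|.
  have := near_p z z1 (lt_le_trans zd12 d12_2); rewrite distrC.
  move/(le_lt_trans (lerB_dist _ _)); rewrite ltrBlDr => h.
  by rewrite -(ltrD2l e) -splitr.
have := near_ratio z z1 (lt_le_trans zd12 d12_1).
rewrite (rootP qz0) invr0 mulr0 subr0 normrM normfV => ratio_small.
have : `|p.[z]| <= `|p.[z]| / `|q.[z]| by rewrite ler_pdivlMr ?normr_gt0 // ler_piMr.
by move/(lt_le_trans p_big)/lt_trans/(_ ratio_small); rewrite ltxx.
Qed.

End Disc.

Section Circle.
Context {C : numClosedFieldType}.
Implicit Types (p q : {poly C}) (z : C).

Definition conj_recip (m : nat) (h : {poly C}) : {poly C} :=
  \poly_(i < m.+1) (h`_(m - i))^*.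

Lemma conj_recip_circle m (h : {poly C}) z : (size h <= m.+1)%N -> `|z| = 1 ->
  (conj_recip m h).[z] = z ^+ m * (h.[z])^*.
Proof.
move=> hm z1; have z0 : z != 0 by rewrite -normr_eq0 z1 oner_eq0.
rewrite horner_poly (horner_coef_wide _ hm) rmorph_sum mulr_sumr.
rewrite (reindex_inj rev_ord_inj) /=; apply: eq_bigr => i _.
have im : (i <= m)%N by rewrite -ltnS.
rewrite subSS subKn // rmorphM rmorphXn /= (conjC_norm1 _ z1) exprVn exprB ?unitfE //.
by rewrite mulrCA mulrA.
Qed.

Lemma circle_norm_lbound {f : {poly C}} : f != 0 ->
  (forall z, `|z| = 1 -> f.[z] != 0) ->
  exists2 L : C, 0 < L & forall z, `|z| = 1 -> L <= `|f.[z]|.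
Proof.
move=> f0 f_circle; have [rs fE] := closed_field_poly_normal f.
have lf0 : lead_coef f != 0 by rewrite lead_coef_eq0.
(* on the circle each factor [|z - rho|] is at least [| |rho| - 1 |] > 0 *)
exists (`|lead_coef f| * \prod_(rho <- rs) `| `|rho| - 1|).
  rewrite mulr_gt0 ?normr_gt0 // big_seq prodr_gt0 // => rho rho_rs.
  rewrite normr_gt0 subr_eq0; apply: contraTneq rho_rs => rho1.
  by rewrite -root_prod_XsubC -(rootZ _ _ lf0) -fE rootE f_circle.
move=> z z1; rewrite [in X in _ <= X]fE hornerZ normrM horner_prod normr_prod.
rewrite ler_wpM2l // ler_prod // => rho _; rewrite normr_ge0 hornerXsubC /=.
by rewrite -z1 distrC ler_dist_dist.
Qed.

Lemma ratio_circle_sup_lt1 p q :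
  (forall z, `|z| = 1 -> `|p.[z]| < `|q.[z]|) ->
  exists2 r : C, r < 1 & forall z, `|z| = 1 -> `|p.[z] / q.[z]| <= r.
Proof.
move=> pq; set m := maxn (size p) (size q).
have sp : (size p <= m.+1)%N by rewrite ltnW // ltnS leq_maxl.
have sq : (size q <= m.+1)%N by rewrite ltnW // ltnS leq_maxr.
pose gap z := `|q.[z]| ^+ 2 - `|p.[z]| ^+ 2.
have gap0 z : `|z| = 1 -> 0 < gap z.
  by move=> z1; rewrite subr_gt0 ltr_pXn2r ?nnegrE // pq.
pose f := q * conj_recip m q - p * conj_recip m p.
have f_circle z : `|z| = 1 -> `|f.[z]| = gap z.
  move=> z1; have -> : f.[z] = z ^+ m * gap z.
    by rewrite !hornerE !conj_recip_circle // /gap !normCK; ring.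
  by rewrite normrM normrX z1 expr1n mul1r gtr0_norm ?gap0.
have z1_1 : `|1 : C| = 1 by rewrite normr1.
have f0 : f != 0.
  by apply: contraTneq (gap0 1 z1_1) => f0; rewrite -f_circle // f0 horner0 normr0 ltxx.
have [L L0 Lf] : exists2 L : C, 0 < L & forall z, `|z| = 1 -> L <= gap z.
  have [|L L0 Lf] := circle_norm_lbound f0.
    by move=> z z1; rewrite -normr_gt0 f_circle ?gap0.
  by exists L => // z z1; rewrite -f_circle ?Lf.
pose M := (\sum_(i < size q) `|q`_i|) ^+ 2.
have qM z : `|z| = 1 -> `|q.[z]| ^+ 2 <= M.
  by move=> z1; rewrite ler_pXn2r ?nnegrE ?sumr_ge0 ?norm_horner_le_sum ?z1.
have q_gt_gap z : `|z| = 1 -> gap z <= `|q.[z]| ^+ 2.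
  by move=> z1; rewrite gerDl oppr_le0 exprn_ge0.
have M0 : 0 < M.
  exact: lt_le_trans (lt_le_trans (gap0 1 z1_1) (q_gt_gap 1 z1_1)) (qM 1 z1_1).
set u := L / M; have u0 : 0 < u by rewrite divr_gt0.
(* |p/q|^2 <= 1 - u <= (1 - u/2)^2 on the circle *)
exists (1 - u / 2); first by rewrite gtrDl oppr_lt0 divr_gt0.
move=> z z1; have q0 : 0 < `|q.[z]| ^+ 2.
  exact: lt_le_trans (gap0 z z1) (q_gt_gap z z1).
have pq_u : `|p.[z]| ^+ 2 <= (1 - u) * `|q.[z]| ^+ 2.
  rewrite mulrBl mul1r lerBrDl -lerBrDr (le_trans _ (Lf z z1)) //.
  by rewrite /u mulrAC ler_pdivrMr // ler_wpM2l ?qM // ltW.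
have u1 : 0 <= 1 - u.
  by rewrite -(pmulr_lge0 _ q0) (le_trans _ pq_u) ?exprn_ge0.
have r0 : 0 <= 1 - u / 2.
  by rewrite (le_trans u1) // lerD2l lerN2 ler_pdivrMr // ler_pMr ?ler1n.
rewrite normrM normfV -(@ler_pXn2r _ 2) ?nnegrE ?divr_ge0 //.
rewrite expr_div_n ler_pdivrMr // (le_trans pq_u) // ler_wpM2r ?exprn_ge0 //.
rewrite -subr_ge0 (_ : (1 - u / 2) ^+ 2 - (1 - u) = (u / 2) ^+ 2); last by field.
by rewrite exprn_ge0 // divr_ge0 // ltW.
Qed.

End Circle.

Section Blaschke.
Context {C : numClosedFieldType}.
Implicit Types (c w x : C) (zs : seq C).

Definition poisson_kernel w c : C := (1 - `|w| ^+ 2) / `|c - w| ^+ 2.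

Lemma poisson_kernel_gt0 w c : `|w| < 1 -> c != w -> 0 < poisson_kernel w c.
Proof.
by move=> w1 cw; rewrite divr_gt0 ?exprn_gt0 ?normr_gt0 ?subr_eq0 // subr_gt0 exprn_ilt1.
Qed.

Lemma norm_blaschke_factorE w c :
  `|1 - w^* * c| ^+ 2 - `|c - w| ^+ 2 = (1 - `|c| ^+ 2) * (1 - `|w| ^+ 2).
Proof. by rewrite !normCK !rmorphB !rmorphM rmorph1 /= conjCK; ring. Qed.

Lemma norm_blaschke_factor_lt1 w c :
  `|c| < 1 -> `|w| < 1 -> `|c - w| < `|1 - w^* * c|.
Proof.
move=> c1 w1; rewrite -(@ltr_pXn2r _ 2) ?nnegrE // -subr_gt0.
by rewrite norm_blaschke_factorE mulr_gt0 // subr_gt0 exprn_ilt1.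
Qed.

Lemma norm_blaschke_factor_gt1 w c :
  1 < `|c| -> `|w| < 1 -> `|1 - w^* * c| < `|c - w|.
Proof.
move=> c1 w1; rewrite -(@ltr_pXn2r _ 2) ?nnegrE // -subr_lt0.
by rewrite norm_blaschke_factorE pmulr_llt0 ?subr_lt0 ?subr_gt0 ?exprn_egt1 ?exprn_ilt1.
Qed.

Lemma blaschke_factor_neq0 w x : `|x| <= 1 -> `|w| < 1 -> 1 - w^* * x != 0.
Proof.
move=> x1 w1; rewrite subr_eq0 eq_sym.
apply: contraTneq (_ : `|w^* * x| < 1) => [->|]; first by rewrite normr1 ltxx.
by rewrite normrM norm_conjC (le_lt_trans _ w1) // ler_piMr.
Qed.

(* the logarithmic derivative of (z - w) / (1 - w^* z), times z, on the circle *)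
Lemma blaschke_factor_logder w c : `|c| = 1 -> c != w ->
  c / (c - w) + c * w^* / (1 - w^* * c) = poisson_kernel w c.
Proof.
move=> c1 cw; have c0 : c != 0 by rewrite -normr_eq0 c1 oner_eq0.
have cw0 : c - w != 0 by rewrite subr_eq0.
have cwc : (c - w)^* != 0 by rewrite conjC_eq0.
have -> : 1 - w^* * c = c * (c - w)^*.
  by rewrite rmorphB /= mulrBr -normCK c1 expr1n mulrC.
rewrite /poisson_kernel !normCK; move: cwc; rewrite rmorphB /= (conjC_norm1 _ c1).
(* [field] must see the conjugate as an atom *)
move: (w^*) => wb cwc; have wc0 : 1 - wb * c != 0.
  by rewrite (_ : 1 - _ = c * (c^-1 - wb)) ?mulf_neq0 // mulrBr mulfV // mulrC.
by field; rewrite mulNr c0 cw0 wc0.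
Qed.

Definition blaschke_num zs : {poly C} := \prod_(w <- zs) ('X - w%:P).
Definition blaschke_den zs : {poly C} := \prod_(w <- zs) (1 - w^* *: 'X).
(* its roots are the points where the Blaschke product num/den takes the value 1 *)
Definition blaschke_poly zs := blaschke_num zs - blaschke_den zs.

Lemma horner_blaschke_num zs x : (blaschke_num zs).[x] = \prod_(w <- zs) (x - w).
Proof. by rewrite horner_prod; apply: eq_bigr => w _; rewrite hornerXsubC. Qed.

Lemma horner_blaschke_den zs x : (blaschke_den zs).[x] = \prod_(w <- zs) (1 - w^* * x).
Proof. by rewrite horner_prod; apply: eq_bigr => w _; rewrite !hornerE. Qed.

Lemma size_blaschke_den zs : 0 \in zs -> (size (blaschke_den zs) <= size zs)%N.
Proof.
have size_factor w : (size (1 - w^* *: 'X : {poly C})%R <= 2)%N.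
  rewrite (leq_trans (size_polyD _ _)) // geq_max size_poly1 size_polyN.
  by rewrite (leq_trans (size_scale_leq _ _)) ?size_polyX.
have size_prod s : (size (blaschke_den s) <= (size s).+1)%N.
  elim: s => [|w s IHs]; first by rewrite /blaschke_den big_nil size_poly1.
  rewrite /blaschke_den big_cons (leq_trans (size_polyMleq _ _)) //.
  by rewrite -subn1 leq_subLR (leq_trans (leq_add (size_factor w) IHs)) // add1n.
move=> zs0; rewrite /blaschke_den (perm_big _ (perm_to_rem zs0)) big_cons.
rewrite conjC0 scale0r subr0 /= mul1r (leq_trans (size_prod _)) // size_rem //.
by rewrite prednK // -has_predT; apply/hasP; exists 0.
Qed.

Lemma blaschke_den_neq0 zs x : (forall w, w \in zs -> `|w| < 1) -> `|x| <= 1 ->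
  (blaschke_den zs).[x] != 0.
Proof.
move=> zs_in x1; rewrite horner_blaschke_den prodf_seq_neq0.
by apply/allP => w /zs_in w1; apply: blaschke_factor_neq0.
Qed.

End Blaschke.

Section BlaschkePoisson.
Context {C : numClosedFieldType}.
Variables (z0 : C) (ws : seq C).
Hypotheses (z0_in : `|z0| < 1) (ws_in : forall w, w \in ws -> `|w| < 1) (ws0 : 0 \in ws).

Let zs := z0 :: ws.
Let E := blaschke_poly zs.

Let zs_in w : w \in zs -> `|w| < 1.
Proof. by rewrite inE => /predU1P[->|/ws_in]. Qed.

Lemma blaschke_poly_root_norm1 c : root E c -> `|c| = 1.
Proof.
rewrite rootE /E /blaschke_poly hornerD hornerN subr_eq0.
rewrite horner_blaschke_num horner_blaschke_den => /eqP numden.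
have zs_z0 : has (mem zs) zs by apply/hasP; exists z0; exact: mem_head.
case: (real_ltgtP (normr_real c) (real1 C)) => // c1; move: numden.
- have : `|\prod_(w <- zs) (c - w)| < `|\prod_(w <- zs) (1 - w^* * c)|.
    rewrite !normr_prod big_seq [X in _ < X]big_seq ltr_prod ?zs_z0 // => w /zs_in w1.
    by rewrite normr_ge0 norm_blaschke_factor_lt1.
  by move=> + /(congr1 Num.norm) e; rewrite e ltxx.
- have : `|\prod_(w <- zs) (1 - w^* * c)| < `|\prod_(w <- zs) (c - w)|.
    rewrite !normr_prod big_seq [X in _ < X]big_seq ltr_prod ?zs_z0 // => w /zs_in w1.
    by rewrite normr_ge0 norm_blaschke_factor_gt1.
  by move=> + /(congr1 Num.norm) e; rewrite e ltxx.
Qed.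

Lemma size_blaschke_poly : size E = (size zs).+1.
Proof.
rewrite /E /blaschke_poly size_polyDl ?size_polyN /blaschke_num size_prod_XsubC //.
by rewrite ltnS size_blaschke_den // inE ws0 orbT.
Qed.

Lemma blaschke_poly_deriv c : root E c ->
  c * E^`().[c] = (blaschke_num zs).[c] * \sum_(w <- zs) poisson_kernel w c.
Proof.
move=> Ec; have c1 := blaschke_poly_root_norm1 c Ec.
have cw w : w \in zs -> c != w.
  by move=> /zs_in w1; apply: contraTneq w1 => <-; rewrite c1 ltxx.
have num_den : (blaschke_num zs).[c] = (blaschke_den zs).[c].
  by apply/eqP; rewrite -subr_eq0 -hornerN -hornerD.
rewrite derivB hornerD hornerN !horner_deriv_prod; first last.
- by move=> w /cw; rewrite hornerXsubC subr_eq0.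
- by move=> w /zs_in w1; rewrite !hornerE blaschke_factor_neq0 ?c1.
rewrite -num_den -mulrBr mulrCA -sumrB mulr_sumr; congr (_ * _).
apply: eq_big_seq => w /cw cw'; rewrite -blaschke_factor_logder //.
by rewrite !derivE !hornerE mulrBr mulNr mulrN opprK mulrA.
Qed.

Lemma poisson_sum_gt0 c : `|c| = 1 -> 0 < \sum_(w <- zs) poisson_kernel w c.
Proof.
move=> c1; have cw w : w \in zs -> c != w.
  by move=> /zs_in w1; apply: contraTneq w1 => <-; rewrite c1 ltxx.
rewrite big_cons ltr_wpDr ?poisson_kernel_gt0 ?cw ?mem_head //.
by rewrite big_seq sumr_ge0 // => w ws_w; rewrite ltW // poisson_kernel_gt0 ?ws_in ?cw // inE ws_w orbT.
Qed.

Lemma blaschke_poly_roots : exists cs : seq C,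
  [/\ uniq cs, size cs = size zs, E = lead_coef E *: \prod_(c <- cs) ('X - c%:P)
    & forall c, c \in cs -> root E c].
Proof.
have [cs Ecs] := closed_field_poly_normal E; exists cs.
have lE0 : lead_coef E != 0 by rewrite lead_coef_eq0 -size_poly_gt0 size_blaschke_poly.
split=> // [||c cs_c]; last first.
- by rewrite {1}Ecs rootZ // root_prod_XsubC.
- by have := size_blaschke_poly; rewrite {1}Ecs size_scale // size_prod_XsubC => -[].
(* E' does not vanish at the roots of E, which therefore are simple *)
suff : separable_poly E.
  by rewrite {1}Ecs (eqp_separable (eqp_scale _ lE0)) separable_prod_XsubC.
rewrite unlock; apply: Pdiv.ClosedField.root_coprimep => c Ec.
have c1 := blaschke_poly_root_norm1 c Ec; have c0 : c != 0 by rewrite -normr_eq0 c1 oner_eq0.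
suff : c * E^`().[c] != 0 by rewrite mulf_eq0 negb_or => /andP[].
rewrite blaschke_poly_deriv // mulf_neq0 ?(gt_eqF (poisson_sum_gt0 _ c1)) //.
rewrite horner_blaschke_num prodf_seq_neq0; apply/allP => w /zs_in w1.
by rewrite subr_eq0; apply: contraTneq w1 => <-; rewrite c1 ltxx.
Qed.

Lemma blaschke_poisson : exists2 cs : seq C, (forall c, c \in cs -> `|c| = 1) &
  forall h : {poly C}, (size h <= size zs)%N ->
    h.[z0] / (blaschke_den ws).[z0] =
    \sum_(c <- cs) poisson_kernel z0 c / (\sum_(w <- zs) poisson_kernel w c) *
                   (h.[c] / (blaschke_den ws).[c]).
Proof.
have [cs [ucs size_cs Ecs cs_root]] := blaschke_poly_roots.
exists cs => [c /cs_root/(blaschke_poly_root_norm1 c) //|h sh].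
set D := blaschke_den ws.
have D0 x : `|x| <= 1 -> D.[x] != 0 by apply: blaschke_den_neq0.
have den_zs x : (blaschke_den zs).[x] = (1 - z0^* * x) * D.[x].
  by rewrite /blaschke_den big_cons hornerM !hornerE.
have Ez0 : E.[z0] = - ((1 - z0^* * z0) * D.[z0]).
  rewrite /E /blaschke_poly hornerD hornerN den_zs horner_blaschke_num big_cons.
  by rewrite subrr mul0r sub0r.
have nEz0 : ~~ root E z0.
  by rewrite rootE Ez0 oppr_eq0 mulf_neq0 ?D0 ?blaschke_factor_neq0 ?ltW.
rewrite (lagrange_interpolation _ h _ _ ucs Ecs _ nEz0) ?size_cs // Ez0 mulrAC mulr_sumr.
apply: eq_big_seq => c cs_c; have Ec := cs_root c cs_c.
have c1 := blaschke_poly_root_norm1 c Ec.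
have c0 : c != 0 by rewrite -normr_eq0 c1 oner_eq0.
have cz0 : c - z0 != 0 by rewrite subr_eq0; apply: contraTneq z0_in => <-; rewrite c1 ltxx.
set S := \sum_(w <- zs) poisson_kernel w c.
have S0 : S != 0 by rewrite gt_eqF ?poisson_sum_gt0.
have E'c : E^`().[c] = (1 - z0^* * c) * D.[c] * S / c.
  have num_den : (blaschke_num zs).[c] = (blaschke_den zs).[c].
    by apply/eqP; rewrite -subr_eq0 -hornerN -hornerD.
  by rewrite -den_zs -num_den /S -blaschke_poly_deriv // mulrC mulKf.
have zc0 : 1 - z0^* * c != 0 by rewrite blaschke_factor_neq0 ?c1.
have Dc : D.[c] != 0 by rewrite D0 ?c1.
have Dz0 : D.[z0] != 0 by rewrite D0 ?ltW.
have z0c : z0 - c != 0 by rewrite -oppr_eq0 opprB.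
rewrite E'c /poisson_kernel !normCK rmorphB /= (conjC_norm1 _ c1).
move: zc0; move: (z0^*) => zb zc0.
by field; rewrite mulNr Dc S0 c0 zc0 cz0 z0c Dz0.
Qed.

End BlaschkePoisson.

Section MaxModulus.
Context {C : numClosedFieldType}.
Implicit Types (p q : {poly C}) (x z : C).

Lemma blaschke_den_of_zero_free q (k : nat) : (forall z, `|z| <= 1 -> q.[z] != 0) ->
  exists ws : seq C, [/\ forall w, w \in ws -> `|w| < 1, 0 \in ws, (k <= size ws)%N &
    exists2 kappa : C, kappa != 0 & forall x, (blaschke_den ws).[x] = kappa * q.[x]].
Proof.
move=> qnz; have [rs qE] := closed_field_poly_normal q.
have lq0 : lead_coef q != 0.
  have q00 : q.[0] != 0 by rewrite qnz ?normr0 ?ler01.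
  by rewrite lead_coef_eq0; apply: contraNneq q00 => ->; rewrite horner0.
have rs_out a : a \in rs -> 1 < `|a|.
  move=> rs_a; rewrite real_ltNge ?normr_real ?real1 //; apply: contraTN rs_a => a1.
  by rewrite -root_prod_XsubC -(rootZ _ _ lq0) -qE rootE qnz.
have rs0 a : a \in rs -> a != 0 by move=> /rs_out a1; rewrite -normr_gt0 (lt_trans ltr01).
(* reflect each root [a] of [q] to [1 / a^*]; the zeros at the origin only raise the degree *)
exists (nseq k.+1 0 ++ [seq (a^-1)^* | a <- rs]); split.
- move=> w; rewrite mem_cat mem_nseq => /orP[/andP[_ /eqP->]|/mapP[a /rs_out a1 ->]].
    by rewrite normr0.
  by rewrite norm_conjC normfV invf_lt1 // (lt_trans ltr01).
- by rewrite mem_cat mem_nseq eqxx.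
- by rewrite size_cat size_nseq ltnW // ltn_addr.
exists (\prod_(a <- rs) (- a^-1) / lead_coef q).
  by rewrite mulf_neq0 ?invr_eq0 // prodf_seq_neq0; apply/allP => a /rs0; rewrite oppr_eq0 invr_eq0.
move=> x; rewrite horner_blaschke_den big_cat big_map /= big1_seq; last first.
  by move=> w /andP[_]; rewrite -[_ :: _]/(nseq k.+1 0) mem_nseq => /eqP->; rewrite conjC0 mul0r subr0.
rewrite mul1r {2}qE hornerZ horner_prod mulrA divfK // -big_split /=.
apply: eq_big_seq => a rs_a; rewrite conjCK hornerXsubC.
by rewrite mulrBr !mulNr opprK mulVf ?rs0 // addrC.
Qed.

Lemma max_modulus_ratio p q (r z0 : C) : (forall z, `|z| <= 1 -> q.[z] != 0) ->
  (forall z, `|z| = 1 -> `|p.[z]| <= r * `|q.[z]|) -> `|z0| < 1 ->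
  `|p.[z0]| <= r * `|q.[z0]|.
Proof.
move=> qnz pq z01.
have [ws [ws_in ws0 sws [kappa kappa0 Dq]]] := blaschke_den_of_zero_free _ (size p) qnz.
have [cs cs1 poisson] := blaschke_poisson _ _ z01 ws_in ws0.
set D := blaschke_den ws in Dq poisson.
pose weight c := poisson_kernel z0 c / \sum_(w <- z0 :: ws) poisson_kernel w c.
have weight_gt0 c : c \in cs -> 0 < weight c.
  move=> /cs1 c1; rewrite divr_gt0 ?poisson_sum_gt0 ?poisson_kernel_gt0 //.
  by apply: contraTneq z01 => <-; rewrite c1 ltxx.
have D0 x : `|x| <= 1 -> D.[x] != 0 by move=> x1; rewrite Dq mulf_neq0 ?qnz.
have weight_sum1 : \sum_(c <- cs) weight c = 1.
  have := poisson D; rewrite divff ?D0 ?ltW // => -> //.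
    by apply: eq_big_seq => c /cs1 c1; rewrite divff ?mulr1 ?D0 ?c1.
  by rewrite (leq_trans (size_blaschke_den _ ws0)) // ltnW.
have pqD x : p.[x] / q.[x] = kappa * (p.[x] / D.[x]).
  by rewrite Dq invfM mulrCA mulVKf.
have ratio : p.[z0] / q.[z0] = \sum_(c <- cs) weight c * (p.[c] / q.[c]).
  rewrite pqD poisson; last by rewrite (leq_trans sws).
  by rewrite mulr_sumr; apply: eq_bigr => c _; rewrite pqD mulrCA.
have : `|p.[z0] / q.[z0]| <= r.
  rewrite ratio -[r]mul1r -weight_sum1 mulr_suml (le_trans (ler_norm_sum _ _ _)) //.
  rewrite big_seq [X in _ <= X]big_seq ler_sum // => c cs_c.
  have w0 := weight_gt0 c cs_c; rewrite normrM gtr0_norm // ler_wpM2l ?(ltW w0) //.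
  have c1 := cs1 c cs_c.
  by rewrite normrM normfV ler_pdivrMr ?pq // normr_gt0 qnz // c1.
by rewrite normrM normfV ler_pdivrMr // normr_gt0 qnz // ltW.
Qed.

End MaxModulus.

Section Bidisc.
Context {C : numClosedFieldType}.
Implicit Types (P Q p q : {poly C}).

Lemma bidisc_zero_free_iff P Q :
  (forall z w : C, `|z| <= 1 -> `|w| <= 1 -> Q.[z] - w * P.[z] != 0) <->
  (forall z : C, `|z| <= 1 -> `|P.[z]| < `|Q.[z]|).
Proof.
split=> [zero_free z z1 | PQ z w z1 w1].
  rewrite real_ltNge ?normr_real //; apply/negP => QP.
  have [P0 | P0] := eqVneq P.[z] 0.
    have := zero_free z 0 z1; rewrite normr0 ler01 mul0r subr0 => /(_ isT) Qz.
    by move: QP; rewrite P0 normr0 normr_le0 (negPf Qz).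
  have := zero_free z (Q.[z] / P.[z]) z1; rewrite divfK // subrr eqxx.
  by rewrite normrM normfV ler_pdivrMr ?normr_gt0 // mul1r QP => /(_ isT).
rewrite subr_eq0; apply: contraTneq (PQ z z1) => ->.
by rewrite real_ltNge ?normr_real // negbK normrM ler_piMl.
Qed.

Lemma zero_free_of_cont {p q : {poly C}} : q != 0 -> coprimep p q ->
  cont_on_cldisc (fun z => p.[z] / q.[z]) -> forall z, `|z| <= 1 -> q.[z] != 0.
Proof.
move=> q0 pq cont z z1; apply/negP => qz.
have qp : coprimep q p by rewrite coprimep_sym.
exact: rational_not_cont_at_pole q0 z1 qz (coprimep_root qp qz) cont.
Qed.

End Bidisc.

Section ReducedRatio.
Context {C : numClosedFieldType}.
Variables (P Q : {poly C}).
Hypothesis Q0 : Q != 0.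

Let g := gcdp P Q.
Let p := P %/ g.
Let q := Q %/ g.

Let g0 : g != 0. Proof. by rewrite gcdp_eq0 negb_and Q0 orbT. Qed.
Let PE z : P.[z] = p.[z] * g.[z]. Proof. by rewrite -hornerM divpK ?dvdp_gcdl. Qed.
Let QE z : Q.[z] = q.[z] * g.[z]. Proof. by rewrite -hornerM divpK ?dvdp_gcdr. Qed.

Lemma reduced_ratio_of_norm_lt :
  (forall z, `|z| <= 1 -> `|P.[z]| < `|Q.[z]|) ->
  (holo_on_disc (fun z => p.[z] / q.[z]) /\ cont_on_cldisc (fun z => p.[z] / q.[z]) /\
    exists2 r : C, r < 1 & forall z, `|z| = 1 -> `|p.[z] / q.[z]| <= r) /\
  (forall z, root P z -> root Q z -> 1 < `|z|).
Proof.
move=> PQ; have Qz z : `|z| <= 1 -> Q.[z] != 0.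
  by move=> z1; rewrite -normr_gt0 (le_lt_trans _ (PQ z z1)).
have qz z : `|z| <= 1 -> q.[z] != 0 by move/Qz; rewrite QE mulf_eq0 negb_or => /andP[].
have gz z : `|z| <= 1 -> g.[z] != 0 by move/Qz; rewrite QE mulf_eq0 negb_or => /andP[].
split; first split; [exact: rational_holo_on_disc | split |].
- exact: rational_cont_on_cldisc.
- apply: ratio_circle_sup_lt1 => z z1; have z1' : `|z| <= 1 by rewrite z1.
  by have := PQ z z1'; rewrite PE QE !normrM ltr_pM2r // normr_gt0 gz.
- move=> z _ Qz0; rewrite real_ltNge ?normr_real //; apply: contraTN Qz0 => z1.
  exact: Qz.
Qed.

Lemma norm_lt_of_reduced_ratio :
  cont_on_cldisc (fun z => p.[z] / q.[z]) ->
  (exists2 r : C, r < 1 & forall z, `|z| = 1 -> `|p.[z] / q.[z]| <= r) ->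
  (resultant P Q = 0 -> forall z, root P z -> root Q z -> 1 < `|z|) ->
  forall z, `|z| <= 1 -> `|P.[z]| < `|Q.[z]|.
Proof.
move=> cont [r r1 pq_circle] common_roots.
have q0 : q != 0 by apply: contraNneq Q0 => q0; rewrite -[Q](divpK (dvdp_gcdr P Q)) -/g -/q q0 mul0r.
have pq : coprimep p q by rewrite coprimep_div_gcd // Q0 orbT.
have qz := zero_free_of_cont q0 pq cont.
have gz z : `|z| <= 1 -> g.[z] != 0.
  move=> z1; apply: contraTneq z1 => gz0; have gzr : root g z by rewrite rootE gz0.
  rewrite -real_ltNge ?normr_real ?real1 //; apply: common_roots.
  - by apply/eqP; rewrite resultant_eq0 (root_size_gt1 g0 gzr).
  - by rewrite rootE PE gz0 mulr0.
  - by rewrite rootE QE gz0 mulr0.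
have pq_circle' w : `|w| = 1 -> `|p.[w]| <= r * `|q.[w]|.
  move=> w1; rewrite -ler_pdivrMr ?normr_gt0 ?qz ?w1 //.
  by rewrite -normfV -normrM pq_circle.
have pq_disc z : `|z| <= 1 -> `|p.[z]| <= r * `|q.[z]|.
  rewrite le_eqVlt => /orP[/eqP|]; first exact: pq_circle'.
  exact: max_modulus_ratio qz pq_circle'.
move=> z z1; rewrite PE QE !normrM ltr_pM2r ?normr_gt0 ?gz //.
by apply: le_lt_trans (pq_disc z z1) _; rewrite gtr_pMl // normr_gt0 qz.
Qed.

End ReducedRatio.

Lemma Qn_neq0 {C : numClosedFieldType} {n : nat} (y : 'I_n.-1 -> C) : Qn y != 0.
Proof.
have Qy0 : (Qn y).[0] = 1.
  rewrite /Qn hornerD horner_sum big1 ?addr0 ?hornerC // => j _.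
  by rewrite hornerZ hornerXn expr0n mulr0.
by apply/eqP => Q0; move: Qy0; rewrite Q0 horner0 => /eqP; rewrite eq_sym oner_eq0.
Qed.

Theorem theorem3p2 (C : numClosedFieldType) (n : nat) (hn : (2 <= n)%N)
  (x : 'I_n -> C) (y : 'I_n.-1 -> C) :
  G1n x y <->
  ((holo_on_disc (Psin x y) /\ cont_on_cldisc (Psin x y) /\
    exists2 r : C, r < 1 & forall z : C, `|z| = 1 -> `|Psin x y z| <= r)
   /\
   (Rn x y = 0 -> forall z : C, root (Pn x) z -> root (Qn y) z -> 1 < `|z|)).
Proof.
have Q0 := Qn_neq0 y; rewrite /G1n bidisc_zero_free_iff.
split=> [PQ | [[_ [cont sup]] common_roots]].
  have [ratio_props common_roots] := reduced_ratio_of_norm_lt _ _ PQ.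
  by split=> // _.
exact: norm_lt_of_reduced_ratio _ _ Q0 cont sup common_roots.
Qed.
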